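(* Let $f\colon K\to R$ be a homomorphism of (nonunital) rings. Assume that $f$ is either left t-unital or right t-unital. Then the ring $R$ is t-unital.
   Context: Rings are associative, not necessarily unital, and ring homomorphisms need not preserve units. A ring $R$ is t-unital if the multiplication map $R\otimes_R R\to R$ is an isomorphism. A left $K$-module $M$ is t-unital if $K\otimes_K M\to M$, $k\otimes m\mapsto km$, is an isomorphism, and a right $K$-module $N$ is t-unital if $N\otimes_K K\to N$ is an isomorphism. The homomorphism $f$ is left (resp. right) t-unital if $R$, with the left (resp. right) $K$-module structure induced by $f$, is a t-unital left (resp. right) $K$-module. *)

From HB Require Import structures.
From mathcomp Require Import all_boot all_order all_algebra.
Set Implicit Arguments. Unset Strict Implicit. Unset Printing Implicit Defensive.
Import Order.TTheory GRing.Theory Num.Theory.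
Local Open Scope ring_scope.

Record nuring := NURing {
  nu_carrier :> zmodType;
  nu_mul : nu_carrier -> nu_carrier -> nu_carrier;
  nu_mulA : forall x y z, nu_mul x (nu_mul y z) = nu_mul (nu_mul x y) z;
  nu_mulDl : forall x y z, nu_mul (x + y) z = nu_mul x z + nu_mul y z;
  nu_mulDr : forall x y z, nu_mul x (y + z) = nu_mul x y + nu_mul x z
}.

Definition nu_hom (K R : nuring) (f : K -> R) : Prop :=
  (forall x y, f (x + y) = f x + f y) /\
  (forall x y, f (nu_mul x y) = nu_mul (f x) (f y)).

(* The free abelian group on A * B is
   represented by formal integer combinations (seq (int * (A * B))), two
   combinations being equal in the free group iff all coefficients agree. *)
Section Tensor.
Variables (K : Type) (A B C : zmodType).
Variables (ra : A -> K -> A) (la : K -> B -> B) (mu : A -> B -> C).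

Definition fsum := seq (int * (A * B)).

Definition fcoef (s : fsum) (p : A * B) : int :=
  \sum_(q <- s | q.2 == p) q.1.

Definition fscale (n : int) (s : fsum) : fsum :=
  map (fun q => (n * q.1, q.2)) s.

(* The subgroup of the free abelian group generated by the biadditivity and
   K-balancedness relations; the tensor product is the quotient by it. *)
Inductive tensor_rel : fsum -> Prop :=
| trel_addl a1 a2 b :
    tensor_rel [:: (1, (a1 + a2, b)); (-1, (a1, b)); (-1, (a2, b))]
| trel_addr a b1 b2 :
    tensor_rel [:: (1, (a, b1 + b2)); (-1, (a, b1)); (-1, (a, b2))]
| trel_bal a k b :
    tensor_rel [:: (1, (ra a k, b)); (-1, (a, la k b))]
| trel_zero : tensor_rel [::]
| trel_add s t : tensor_rel s -> tensor_rel t -> tensor_rel (s ++ t)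
| trel_scale n s : tensor_rel s -> tensor_rel (fscale n s)
| trel_eq s t : (forall p, fcoef s p = fcoef t p) ->
    tensor_rel s -> tensor_rel t.

Definition fmu (s : fsum) : C := \sum_(q <- s) (mu q.2.1 q.2.2) *~ q.1.

(* The induced map A (x)_K B -> C, a (x) b |-> mu a b, is an isomorphism:
   it is surjective, and its kernel is trivial, i.e. the kernel of the map on
   the free group is (contained in) the relation subgroup. *)
Definition tensor_map_iso : Prop :=
  (forall c : C, exists s : fsum, fmu s = c) /\
  (forall s : fsum, fmu s = 0 -> tensor_rel s).

End Tensor.

Definition tunital_ring (R : nuring) : Prop :=
  @tensor_map_iso R R R R (@nu_mul R) (@nu_mul R) (@nu_mul R).

(* Left K-module M (action act) is t-unital: K (x)_K M -> M iso. *)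
Definition tunital_lmod (K : nuring) (M : zmodType) (act : K -> M -> M) : Prop :=
  @tensor_map_iso K K M M (@nu_mul K) act act.

(* Right K-module N (action act) is t-unital: N (x)_K K -> N iso. *)
Definition tunital_rmod (K : nuring) (N : zmodType) (act : N -> K -> N) : Prop :=
  @tensor_map_iso K N K N act (@nu_mul K) act.

Definition left_tunital_hom (K R : nuring) (f : K -> R) : Prop :=
  tunital_lmod (fun (k : K) (r : R) => nu_mul (f k) r).

Definition right_tunital_hom (K R : nuring) (f : K -> R) : Prop :=
  tunital_rmod (fun (r : R) (k : K) => nu_mul r (f k)).

From HB Require Import structures.
From mathcomp Require Import all_boot all_order all_algebra ring.
Set Implicit Arguments. Unset Strict Implicit. Unset Printing Implicit Defensive.
Import GRing.Theory.
Local Open Scope ring_scope.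

(* Left case: write each x_i of a formal sum s = sum_i n_i (x_i, y_i) over R x R as
   x_i = sum_j f(k_ij) r_ij, using that K (x)_K R -> R is onto.  Modulo the relations of
   R (x)_R R, s is then congruent to the image under f (x) id of
   t = sum_ij n_i (k_ij, r_ij y_i).  If s maps to 0 in R, so does t; hence t is a
   relation of K (x)_K R, and f (x) id carries relations to relations.
   The right case is the left case for the converse rings, since exchanging the factors
   identifies N (x)_K K with K^c (x)_(K^c) N. *)

Lemma zmod_morphism_of_add (U V : zmodType) (h : U -> V) :
  {morph h : x y / x + y} -> zmod_morphism h.
Proof.
move=> hD x y; have h0 : h 0 = 0 by apply: (addrI (h 0)); rewrite -hD !addr0.
by rewrite hD; congr (_ + _); apply: (addrI (h y)); rewrite -hD !subrr.
Qed.

Definition nu_mulr (R : nuring) (y x : R) : R := nu_mul x y.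

HB.instance Definition _ (R : nuring) (y : R) := GRing.isZmodMorphism.Build R R
  (nu_mulr y) (zmod_morphism_of_add (fun x x' => nu_mulDl x x' y)).

Section FreeSums.
Variables A B : zmodType.
Implicit Types (s t : fsum A B) (p : A * B).

Definition flift (M : zmodType) (w : A * B -> M) s : M := \sum_(q <- s) w q.2 *~ q.1.

Lemma fcoef_nil p : fcoef [::] p = 0.
Proof. by rewrite /fcoef big_nil. Qed.

Lemma fcoef_cons n q s p : fcoef ((n, q) :: s) p = (q == p)%:R * n + fcoef s p.
Proof. by rewrite /fcoef big_cons /=; case: eqP; rewrite ?mul1r ?mul0r ?add0r. Qed.

Lemma fcoef_cat s t p : fcoef (s ++ t) p = fcoef s p + fcoef t p.
Proof. by rewrite /fcoef big_cat. Qed.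

Lemma fcoef_scale n s p : fcoef (fscale n s) p = n * fcoef s p.
Proof. by rewrite /fcoef /fscale big_map mulr_sumr. Qed.

Lemma flift_fcoef (M : zmodType) (w : A * B -> M) s (u : seq (A * B)) :
  uniq u -> {subset map snd s <= u} -> flift w s = \sum_(p <- u) w p *~ fcoef s p.
Proof.
move=> uniq_u; elim: s => [|[n q] s IHs] /= sub_u.
  by rewrite /flift big_nil big1 // => p _; rewrite fcoef_nil.
rewrite /flift big_cons -/(flift w s) IHs => [|p sp]; last by apply: sub_u; rewrite inE sp orbT.
under [RHS]eq_bigr do rewrite fcoef_cons mulrzDr.
rewrite big_split /=; congr (_ + _).
rewrite (bigD1_seq q) ?sub_u ?mem_head //= eqxx mul1r big1 ?addr0 // => p.
by rewrite eq_sym => /negbTE->; rewrite mul0r mulr0z.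
Qed.

Lemma eq_flift (M : zmodType) (w : A * B -> M) s t :
  fcoef s =1 fcoef t -> flift w s = flift w t.
Proof.
move=> eq_st; set u := undup (map snd (s ++ t)).
have sub_u r : {subset map snd r <= u} -> flift w r = \sum_(p <- u) w p *~ fcoef r p.
  exact: flift_fcoef (undup_uniq _).
rewrite !sub_u => [|p|p]; rewrite ?mem_undup ?map_cat ?mem_cat.
- by apply: eq_bigr => p _; rewrite eq_st.
- by move=> ->; rewrite orbT.
- by move=> ->.
Qed.

Lemma fmu_cons (C : zmodType) (mu : A -> B -> C) n q s :
  fmu mu ((n, q) :: s) = mu q.1 q.2 *~ n + fmu mu s.
Proof. by rewrite /fmu big_cons. Qed.

Lemma fmu_cat (C : zmodType) (mu : A -> B -> C) s t : fmu mu (s ++ t) = fmu mu s + fmu mu t.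
Proof. by rewrite /fmu big_cat. Qed.

Lemma fmu_scale (C : zmodType) (mu : A -> B -> C) n s : fmu mu (fscale n s) = fmu mu s *~ n.
Proof.
rewrite /fmu /fscale big_map mulrz_suml; apply: eq_bigr => q _ /=.
by rewrite mulrzA mulrzAC.
Qed.

Definition fsum_map (A' B' : zmodType) (G : A * B -> A' * B') s : fsum A' B' :=
  map (fun q => (q.1, G q.2)) s.

Lemma fcoef_fsum_map (A' B' : zmodType) (G : A * B -> A' * B') s (p : A' * B') :
  fcoef (fsum_map G s) p = flift (fun q => (G q == p)%:R) s.
Proof.
rewrite /fcoef /flift big_map big_mkcond; apply: eq_bigr => q _ /=.
by case: eqP; rewrite ?intz ?mul0rz.
Qed.

Lemma fsum_map_cat (A' B' : zmodType) (G : A * B -> A' * B') s t :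
  fsum_map G (s ++ t) = fsum_map G s ++ fsum_map G t.
Proof. exact: map_cat. Qed.

Lemma fsum_map_scale (A' B' : zmodType) (G : A * B -> A' * B') n s :
  fsum_map G (fscale n s) = fscale n (fsum_map G s).
Proof. by rewrite /fsum_map /fscale -!map_comp. Qed.

End FreeSums.

Section Relations.
Variables (K : Type) (A B : zmodType) (ra : A -> K -> A) (la : K -> B -> B).
Local Notation rel := (tensor_rel ra la).
Implicit Types (s t : fsum A B).

Definition tensor_eqv s t := rel (s ++ fscale (-1) t).

Lemma tensor_rel_eqv s t : tensor_eqv s t -> rel s -> rel t.
Proof.
move=> eqv_st rel_s; apply: trel_eq _ (trel_add rel_s (trel_scale (-1) eqv_st)) => p.
by rewrite fcoef_cat fcoef_scale fcoef_cat fcoef_scale; ring.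
Qed.

Lemma tensor_rel_zero_l (b : B) : rel [:: (1, (0, b))].
Proof.
apply: trel_eq _ (trel_scale (-1) (trel_addl ra la 0 0 b)) => p.
by rewrite addr0 fcoef_scale !fcoef_cons fcoef_nil; ring.
Qed.

Lemma tensor_rel_mulrn_l (a : A) (b : B) (n : nat) :
  rel [:: (1, (a *+ n, b)); (- n%:Z, (a, b))].
Proof.
elim: n => [|n IHn].
  apply: trel_eq _ (tensor_rel_zero_l b) => p.
  by rewrite mulr0n !fcoef_cons fcoef_nil; ring.
apply: trel_eq _ (trel_add (trel_addl ra la a (a *+ n) b) IHn) => p.
by rewrite mulrS intS fcoef_cat !fcoef_cons !fcoef_nil; ring.
Qed.

Lemma tensor_rel_mulrz_l (a : A) (b : B) (m : int) :
  rel [:: (1, (a *~ m, b)); (- m, (a, b))].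
Proof.
case: m => n; first exact: tensor_rel_mulrn_l.
have rel_opp := trel_addl ra la (- (a *+ n.+1)) (a *+ n.+1) b.
rewrite addNr in rel_opp.
apply: trel_eq _ (trel_add (trel_add (trel_scale (-1) rel_opp) (tensor_rel_zero_l b))
  (trel_scale (-1) (tensor_rel_mulrn_l a b n.+1))) => p.
rewrite NegzE mulrNz -pmulrn !fcoef_cat !fcoef_scale !fcoef_cons !fcoef_nil; ring.
Qed.

End Relations.

Section Transport.
Variables (K K' : Type) (A B A' B' : zmodType).
Variables (ra : A -> K -> A) (la : K -> B -> B) (ra' : A' -> K' -> A') (la' : K' -> B' -> B').
Variable G : A * B -> A' * B'.
Local Notation rel' := (tensor_rel ra' la').
Hypothesis G_addl : forall a1 a2 b,
  rel' (fsum_map G [:: (1, (a1 + a2, b)); (-1, (a1, b)); (-1, (a2, b))]).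
Hypothesis G_addr : forall a b1 b2,
  rel' (fsum_map G [:: (1, (a, b1 + b2)); (-1, (a, b1)); (-1, (a, b2))]).
Hypothesis G_bal : forall a k b,
  rel' (fsum_map G [:: (1, (ra a k, b)); (-1, (a, la k b))]).

Lemma tensor_rel_map s : tensor_rel ra la s -> rel' (fsum_map G s).
Proof.
elim=> // {s}.
- exact: trel_zero.
- by move=> s t _ rel_s _ rel_t; rewrite fsum_map_cat; apply: trel_add.
- by move=> n s _ rel_s; rewrite fsum_map_scale; apply: trel_scale.
- move=> s t eq_st _ rel_s; apply: trel_eq _ rel_s => p.
  by rewrite !fcoef_fsum_map; apply: eq_flift.
Qed.

End Transport.

Section Swap.
Variables (K : Type) (A B C : zmodType).
Variables (ra : A -> K -> A) (la : K -> B -> B) (mu : A -> B -> C).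
Local Notation swap := (fun p : _ * _ => (p.2, p.1)).

Lemma fsum_map_swapK (A' B' : zmodType) (s : fsum A' B') :
  fsum_map swap (fsum_map swap s) = s.
Proof. by rewrite /fsum_map -map_comp map_id_in // => -[n [a b]]. Qed.

Lemma tensor_rel_swap s : tensor_rel ra la s ->
  tensor_rel (fun b k => la k b) (fun k a => ra a k) (fsum_map swap s).
Proof.
apply: tensor_rel_map => [a1 a2 b|a b1 b2|a k b] /=.
- exact: trel_addr.
- exact: trel_addl.
- apply: trel_eq _ (trel_scale (-1) (trel_bal _ _ b k a)) => p.
  by rewrite fcoef_scale !fcoef_cons fcoef_nil; ring.
Qed.

Lemma tensor_map_iso_swap : tensor_map_iso ra la mu ->
  tensor_map_iso (fun b k => la k b) (fun k a => ra a k) (fun b a => mu a b).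
Proof.
have fmu_swap s : fmu mu (fsum_map swap s) = fmu (fun b a => mu a b) s.
  by rewrite /fmu big_map.
move=> [mu_surj mu_inj]; split=> [c|s fmu_s].
  by have [s <-] := mu_surj c; exists (fsum_map swap s); rewrite -fmu_swap fsum_map_swapK.
by rewrite -[s]fsum_map_swapK; apply/tensor_rel_swap/mu_inj; rewrite fmu_swap.
Qed.

End Swap.

Definition nu_converse (R : nuring) : nuring :=
  @NURing R (fun x y => nu_mul y x) (fun x y z => esym (nu_mulA z y x))
    (fun x y z => nu_mulDr z x y) (fun x y z => nu_mulDl y z x).

Section Converse.
Variables (K R : nuring) (f : K -> R).

Lemma nu_hom_converse : nu_hom f -> @nu_hom (nu_converse K) (nu_converse R) f.
Proof. by case=> fD fM; split=> // x y; apply: fM. Qed.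

Lemma left_tunital_hom_converse :
  right_tunital_hom f -> @left_tunital_hom (nu_converse K) (nu_converse R) f.
Proof. exact: tensor_map_iso_swap. Qed.

Lemma tunital_ring_converse : tunital_ring (nu_converse R) -> tunital_ring R.
Proof. exact: tensor_map_iso_swap. Qed.

End Converse.

Section LeftTunital.
Variables (K R : nuring) (f : K -> R).
Local Notation act := (fun (k : K) (r : R) => nu_mul (f k) r).
Local Notation fpair := (fun p : K * R => (f p.1, p.2)).
Local Notation mulr_snd y := (fun p : K * R => (p.1, nu_mul p.2 y)).
Local Notation eqvR := (tensor_eqv (@nu_mul R) (@nu_mul R)).

Lemma fmu_mulr_snd y t : fmu act (fsum_map (mulr_snd y) t) = nu_mul (fmu act t) y.
Proof.
rewrite /fmu big_map -[RHS]/(nu_mulr y _) raddf_sum.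
by apply: eq_bigr => q _; rewrite raddfMz /nu_mulr nu_mulA.
Qed.

Lemma fsum_mulr_snd_eqv y t :
  eqvR (fsum_map fpair (fsum_map (mulr_snd y) t)) [:: (1, (fmu act t, y))].
Proof.
elim: t => [|[m [k r]] t IHt].
  apply: trel_eq _ (trel_scale (-1) (tensor_rel_zero_l (@nu_mul R) (@nu_mul R) y)) => p.
  by rewrite /fmu big_nil fcoef_scale !fcoef_cons fcoef_nil; ring.
rewrite /tensor_eqv fmu_cons /=.
have rel_addl := trel_addl (@nu_mul R) (@nu_mul R) (nu_mul (f k) r *~ m) (fmu act t) y.
have rel_mulrz := tensor_rel_mulrz_l (@nu_mul R) (@nu_mul R) (nu_mul (f k) r) y m.
have rel_bal := trel_bal (@nu_mul R) (@nu_mul R) (f k) r y.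
apply: trel_eq _ (trel_add (trel_scale (-1) rel_addl) (trel_add IHt
  (trel_add (trel_scale (-1) rel_mulrz) (trel_scale (-m) rel_bal)))) => p.
by rewrite !fcoef_cat !fcoef_scale !fcoef_cons !fcoef_cat !fcoef_cons !fcoef_nil; ring.
Qed.

Lemma fsum_lift_eqv : (forall x : R, exists t, fmu act t = x) ->
  forall s, exists t, fmu act t = fmu (@nu_mul R) s /\ eqvR (fsum_map fpair t) s.
Proof.
move=> act_surj; elim=> [|[n [x y]] s [t [fmu_t eqv_ts]]].
  by exists [::]; split; [rewrite /fmu !big_nil | exact: trel_zero].
have [tx fmu_tx] := act_surj x.
exists (fscale n (fsum_map (mulr_snd y) tx) ++ t); split.
  by rewrite fmu_cat fmu_scale fmu_mulr_snd fmu_tx fmu_t fmu_cons.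
have := trel_add (trel_scale n (fsum_mulr_snd_eqv y tx)) eqv_ts; rewrite fmu_tx => rel_sum.
apply: trel_eq _ rel_sum => p.
rewrite !fsum_map_cat !fsum_map_scale /= !fcoef_cat !fcoef_scale !fcoef_cons !fcoef_cat.
by rewrite !fcoef_scale !fcoef_cons !fcoef_nil; ring.
Qed.

Lemma tunital_ring_of_left_tunital : nu_hom f -> left_tunital_hom f -> tunital_ring R.
Proof.
move=> [fD fM] [act_surj act_inj]; split=> [c|s fmu_s].
  by have [t <-] := act_surj c; exists (fsum_map fpair t); rewrite /fmu big_map.
have [t [fmu_t eqv_ts]] := fsum_lift_eqv act_surj s.
apply: (tensor_rel_eqv eqv_ts).
apply: (tensor_rel_map (ra := @nu_mul K) (la := act)); last by apply: act_inj; rewrite fmu_t.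
- by move=> a1 a2 b /=; rewrite fD; apply: trel_addl.
- by move=> a b1 b2 /=; apply: trel_addr.
- by move=> a k b /=; rewrite fM; apply: trel_bal.
Qed.

End LeftTunital.

Theorem proposition9p5 (K R : nuring) (f : K -> R) :
  nu_hom f -> (left_tunital_hom f \/ right_tunital_hom f) -> tunital_ring R.
Proof.
move=> hom_f [ltu_f | rtu_f]; first exact: tunital_ring_of_left_tunital ltu_f.
apply: tunital_ring_converse.
exact: tunital_ring_of_left_tunital (nu_hom_converse hom_f) (left_tunital_hom_converse rtu_f).
Qed.
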